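(* There are functors $\mathbf{FinGraph}^l_\star\to\mathbf{FinLoset}$ and $\mathbf{FinGraph}^s_\star\to\mathbf{FinLoset}$ which compute the lexicographic depth-first and breadth-first traversals respectively, i.e. which send each object $G$ to the vertices of $G$ linearly ordered by the lexicographic depth-first traversal (respectively, the lexicographic breadth-first traversal) of $G$ from its distinguished vertex.
   Context: A (directed) graph is $(V,\to)$ with $\to\subseteq V\times V$; $N(u)$ is the set of outgoing edges of $u$. A pointed graph has a distinguished vertex $v_0$; connected means every vertex is reachable by a path from $v_0$. A path is a finite sequence $v_1\to\cdots\to v_n$ of vertices joined by edges, of length $|\pi|$; proper if no vertex repeats; co-initial paths share their source; $\pi\sqsubset\sigma$ means $\pi$ is a proper prefix of $\sigma$. A finite edge-ordered graph is a finite graph with a strict linear order $\triangleleft$ on each neighborhood. Lexicographic path order: if $\pi\sqsubset\sigma$ then $\pi\prec\sigma$ (symmetrically); otherwise, with $\zeta$ the longest common prefix, $u$ its target and $v_1,v_2$ the next vertices, $\pi\prec\sigma$ iff $u\to v_1\triangleleft u\to v_2$. Shortlex: $\pi\prec^s\sigma$ iff $|\pi|<|\sigma|$ or ($|\pi|=|\sigma|$ and $\pi\prec\sigma$). $\min(u\rightsquigarrow v)$ is the $\prec$-least proper path, $\min^s(u\rightsquigarrow v)$ the $\prec^s$-least path, from $u$ to $v$. A homomorphism of finite pointed edge-ordered graphs $h:G\to H$ is a vertex map with (i) $u\to v$ implies $h(u)\to h(v)$; (ii) the distinguished vertex of $G$ is the unique vertex mapped to the distinguished vertex of $H$; (iii)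 $u\to v_1\triangleleft u\to v_2$ implies $h(u)\to h(v_1)\triangleleft h(u)\to h(v_2)$. A lex-homomorphism additionally satisfies $h(\min(u\rightsquigarrow v))=\min(h(u)\rightsquigarrow h(v))$; a short-lex homomorphism additionally satisfies $h(\min^s(u\rightsquigarrow v))=\min^s(h(u)\rightsquigarrow h(v))$. $\mathbf{FinGraph}^l_\star$ (resp. $\mathbf{FinGraph}^s_\star$) is the category of connected, finite, pointed, edge-ordered graphs with lex-homomorphisms (resp. short-lex homomorphisms); $\mathbf{FinLoset}$ is the category of finite linearly ordered sets and monotone maps. Lexicographic depth-first search: with list $L=()$ and stack $S=(v_0)$, repeatedly pop $v$; if $v\notin L$, append $v$ to $L$ and push the neighbors of $v$ not in $L$ in reverse $\triangleleft$-order. Lexicographic breadth-first search: the same with a queue $Q=(v_0)$, dequeuing from the front and enqueuing the neighbors not in $L$ in $\triangleleft$-order. The respective traversal is the order in which vertices are appended to $L$. *)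

From mathcomp Require Import all_boot.
Set Implicit Arguments. Unset Strict Implicit. Unset Printing Implicit Defensive.

(* A finite pointed edge-ordered graph.  [E u v] is the edge u -> v;
   [eord u v1 v2] means (u -> v1) <| (u -> v2): a strict linear order on
   the outgoing edges N(u) of u. *)
Record egraph := EGraph {
  gV :> finType;
  gE : rel gV;
  groot : gV;
  eord : gV -> rel gV;
  eord_sub : forall u x y, eord u x y -> gE u x && gE u y;
  eord_irr : forall u x, ~~ eord u x x;
  eord_trans : forall u x y z, eord u x y -> eord u y z -> eord u x z;
  eord_total : forall u x y, gE u x -> gE u y -> x != y -> eord u x y || eord u y x
}.

Definition connected (G : egraph) : Prop := forall v : G, connect (@gE G) (groot G) v.

Section Paths.
Variable G : egraph.

(* A path v_1 -> ... -> v_n is represented by its source u and the list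
   s = [v_2; ...; v_n] of the remaining vertices: [path gE u s].
   Length |pi| = size s; target = last u s; proper = uniq (u :: s). *)

Fixpoint lexlt_from (u : G) (s t : seq G) : bool :=
  match s, t with
  | [::], [::] => false
  | [::], _ :: _ => true
  | _ :: _, [::] => false
  | y :: s', y' :: t' => if y == y' then lexlt_from y s' t' else eord u y y'
  end.

Definition shortlexlt (u : G) (s t : seq G) : bool :=
  (size s < size t) || ((size s == size t) && lexlt_from u s t).

Definition is_path_between (u v : G) (s : seq G) : bool :=
  path (@gE G) u s && (last u s == v).

Definition is_lexmin (u v : G) (s : seq G) : Prop :=
  [/\ is_path_between u v s, uniq (u :: s) &
      forall t, is_path_between u v t -> uniq (u :: t) -> t != s -> lexlt_from u s t].

Definition is_slmin (u v : G) (s : seq G) : Prop :=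
  is_path_between u v s /\
  forall t, is_path_between u v t -> t != s -> shortlexlt u s t.

Definition nbrs (u : G) : seq G :=
  sort (fun x y => (x == y) || eord u x y) [seq v <- enum G | gE u v].

Definition dfs_step (st : seq G * seq G) : seq G * seq G :=
  let: (L, Stk) := st in
  match Stk with
  | [::] => (L, Stk)
  | v :: Stk' =>
      if v \in L then (L, Stk')
      else let L' := rcons L v in
           (L', [seq w <- nbrs v | w \notin L'] ++ Stk')
  end.

Definition bfs_step (st : seq G * seq G) : seq G * seq G :=
  let: (L, Qu) := st in
  match Qu with
  | [::] => (L, Qu)
  | v :: Qu' =>
      if v \in L then (L, Qu')
      else let L' := rcons L v in
           (L', Qu' ++ [seq w <- nbrs v | w \notin L'])
  end.

(* Number of iterations sufficient for the stack/queue to become empty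
   (each pop either appends one of the #|G| vertices, or discards an entry;
   at most #|G| * #|G| entries are ever pushed). Once empty, the step is
   the identity, so running longer changes nothing. *)
Definition fuel : nat := (#|G|.+1 ^ 2).

Definition dfs_traversal : seq G := (iter fuel dfs_step ([::], [:: groot G])).1.
Definition bfs_traversal : seq G := (iter fuel bfs_step ([::], [:: groot G])).1.

End Paths.

Definition is_hom (G H : egraph) (h : G -> H) : Prop :=
  [/\ forall u v, gE u v -> gE (h u) (h v),
      forall x, h x = groot H <-> x = groot G &
      forall u v1 v2, eord u v1 v2 -> eord (h u) (h v1) (h v2)].

Definition is_lex_hom (G H : egraph) (h : G -> H) : Prop :=
  is_hom h /\
  forall (u v : G) (s : seq G), is_lexmin u v s -> is_lexmin (h u) (h v) (map h s).

Definition is_shortlex_hom (G H : egraph) (h : G -> H) : Prop :=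
  is_hom h /\
  forall (u v : G) (s : seq G), is_slmin u v s -> is_slmin (h u) (h v) (map h s).

Definition trav_le (G : egraph) (L : seq G) (x y : G) : bool := index x L <= index y L.

Definition is_full_enum (G : egraph) (L : seq G) : Prop := uniq L /\ forall v : G, v \in L.

From mathcomp Require Import all_boot zify.
Set Implicit Arguments. Unset Strict Implicit. Unset Printing Implicit Defensive.

(* Let key x be the lexicographically least proper path (for DFS), resp. the
   shortlex-least path (for BFS), from the root to x.  Annotate every pending
   vertex w of the stack/queue with the path key q ++ [w] through the visited
   vertex q that pushed it.  By induction on the search, the visited vertices
   are listed in increasing key order, all their keys are smaller than the keys
   of unvisited vertices, and the annotations of pending entries are strictly
   increasing: for a stack because in lexicographic order everything strictly
   between k and k ++ [z] extends k, for a queue because shortlex compares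
   lengths first.  So the traversal order is the key order.  A lex-
   (resp. short-lex) homomorphism h maps key x to key (h x) and preserves the
   order of co-initial paths, hence is monotone for the traversal orders. *)

Definition reflc (T : eqType) (lt : rel T) : rel T := fun a b => (a == b) || lt a b.

Section ReflexiveClosure.
Variables (T : eqType) (lt : rel T).
Hypothesis lt_trans : transitive lt.

Lemma reflc_refl : reflexive (reflc lt).
Proof. by move=> a; rewrite /reflc eqxx. Qed.

Lemma reflc_lt_trans b a c : reflc lt a b -> lt b c -> lt a c.
Proof. by case/orP=> [/eqP->//|]; apply: lt_trans. Qed.

Lemma lt_reflc_trans b a c : lt a b -> reflc lt b c -> lt a c.
Proof. by move=> ab /orP[/eqP<-//|]; apply: lt_trans. Qed.

Lemma reflc_trans b a c : reflc lt a b -> reflc lt b c -> reflc lt a c.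
Proof. by move=> /reflc_lt_trans ab /orP[/eqP<-//|/ab ac]; rewrite /reflc ac orbT. Qed.

End ReflexiveClosure.

Lemma reflc_total_in (T : eqType) (lt : rel T) (P : {pred T}) :
  (forall a b, a \in P -> b \in P -> a != b -> lt a b || lt b a) ->
  {in P &, total (reflc lt)}.
Proof.
move=> lt_total a b Pa Pb; case: (eqVneq a b) => [->|ab]; first by rewrite reflc_refl.
by rewrite /reflc; case/orP: (lt_total a b Pa Pb ab) => ->; rewrite !orbT.
Qed.

Lemma mem_last_prefix (T : eqType) (u z : T) s : z \in u :: s ->
  exists s1 s2, s = s1 ++ s2 /\ last u s1 = z.
Proof.
rewrite in_cons => /predU1P[->|/splitPr[s1 s2]]; first by exists [::], s.
by exists (rcons s1 z), s2; rewrite cat_rcons last_rcons.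
Qed.

Lemma split_exit (T : Type) (P : pred T) u s : P u -> ~~ P (last u s) ->
  exists s1 y s2, [/\ s = s1 ++ y :: s2, P (last u s1) & ~~ P y].
Proof.
elim: s u => [|x s IH] u /= Pu; first by rewrite Pu.
case Px: (P x); last by exists [::], x, s; rewrite Px.
by move/(IH x Px)=> -[s1 [y [s2 [-> ? ?]]]]; exists (x :: s1), y, s2.
Qed.

Fixpoint bounded_seqs (T : finType) (n : nat) : seq (seq T) :=
  [::] :: if n is k.+1 then [seq x :: s | x <- enum T, s <- bounded_seqs T k] else [::].

Lemma mem_bounded_seqs (T : finType) n (s : seq T) :
  (s \in bounded_seqs T n) = (size s <= n).
Proof.
elim: n s => [|n IH] [|x s] //=; rewrite in_cons /=.
apply/allpairsPdep/idP => [[y [t [_ + [_ ->]]]]|]; first by rewrite IH.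
by rewrite ltnS -IH => st; exists x, s; rewrite mem_enum.
Qed.

Section LeastSeq.
Variables (T : finType) (n : nat) (lt : rel (seq T)) (P : pred (seq T)).
Hypothesis lt_trans : transitive lt.
Hypothesis lt_total : forall a b, P a -> P b -> a != b -> lt a b || lt b a.
Hypothesis P_short : exists2 s, P s & size s <= n.
Hypothesis short_lt_long : forall s m, P s -> P m -> size m <= n < size s -> lt m s.

Definition least_seq : seq T :=
  head [::] (sort (reflc lt) [seq s <- bounded_seqs T n | P s]).

Lemma least_seqP : P least_seq /\ forall s, P s -> reflc lt least_seq s.
Proof.
rewrite /least_seq; set C := filter P _; have [s0 Ps0 s0n] := P_short.
have sorted_C : sorted (reflc lt) (sort (reflc lt) C).
  apply: (sort_sorted_in (reflc_total_in lt_total)).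
  by apply/allP=> s; rewrite mem_filter => /andP[].
have memS s : (s \in sort (reflc lt) C) = P s && (size s <= n).
  by rewrite mem_sort mem_filter mem_bounded_seqs.
case eS: (sort _ C) sorted_C memS => [|m S] /= pathS memS.
  by have := memS s0; rewrite Ps0 s0n.
have /andP[Pm mn] : P m && (size m <= n) by rewrite -memS mem_head.
have /allP minS := order_path_min (reflc_trans lt_trans) pathS.
split=> // s Ps; case: (leqP (size s) n) => sn.
  move: (memS s); rewrite Ps sn in_cons => /predU1P[->|/minS//]; exact: reflc_refl.
by rewrite /reflc short_lt_long ?mn ?orbT.
Qed.

End LeastSeq.

Section Paths.
Variable G : egraph.
Implicit Types (u x y : G) (a b s t : seq G).

Lemma path_between_prefix u x s t : is_path_between u x (s ++ t) ->
  is_path_between u (last u s) s.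
Proof. by rewrite /is_path_between cat_path eqxx andbT => /andP[/andP[]]. Qed.

Lemma path_between_rcons u x y s : is_path_between u x s -> gE x y ->
  is_path_between u y (rcons s y).
Proof.
by case/andP=> us /eqP <- xy; rewrite /is_path_between rcons_path us xy last_rcons /=.
Qed.

Lemma eord_neq u x y : eord u x y -> x != y.
Proof. by apply: contraTneq => ->; rewrite (negbTE (eord_irr _ _)). Qed.

Lemma lexlt_irr u : irreflexive (lexlt_from u).
Proof. by move=> s; elim: s u => //= x s IH u; rewrite eqxx. Qed.

Lemma lexlt_trans u : transitive (lexlt_from u).
Proof.
move=> b a c; elim: a u b c => [|x a IH] u [|y b] [|z c] //=.
case: (eqVneq x y) => [<-|xy]; first by case: (eqVneq x z) => // _; apply: IH.
case: (eqVneq y z) => [<-|_ xy_ord yz_ord]; first by rewrite (negbTE xy).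
have xz_ord := eord_trans xy_ord yz_ord.
by rewrite (negbTE (eord_neq xz_ord)).
Qed.

Lemma lexlt_total u a b : path (@gE G) u a -> path (@gE G) u b -> a != b ->
  lexlt_from u a b || lexlt_from u b a.
Proof.
elim: a u b => [|x a IH] u [|y b] //= /andP[ux pa] /andP[uy pb].
case: (eqVneq x y) => [exy|xy _]; last exact: eord_total.
by subst y; rewrite eqseq_cons eqxx; apply: IH.
Qed.

Lemma lexlt_cat2l u s a b : lexlt_from u (s ++ a) (s ++ b) = lexlt_from (last u s) a b.
Proof. by elim: s u => //= x s IH u; rewrite eqxx. Qed.

Lemma lexlt_prefix u a t : lexlt_from u a (a ++ t) = (t != [::]).
Proof. by rewrite -{1}[a]cats0 lexlt_cat2l; case: t. Qed.

Lemma lexle_prefix u a t : reflc (lexlt_from u) a (a ++ t).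
Proof. by rewrite /reflc lexlt_prefix; case: t => [|y t]; rewrite ?cats0 ?eqxx ?orbT. Qed.

Lemma lexlt_cat u a b s t : lexlt_from u a b -> ~~ prefix a b ->
  lexlt_from u (a ++ s) (b ++ t).
Proof.
elim: a u b => [|x a IH] u [|y b] //=.
by case: eqVneq => // _; apply: IH.
Qed.

Lemma lexlt_rcons_eord u s y z : eord (last u s) y z ->
  lexlt_from u (rcons s y) (rcons s z).
Proof. by move=> yz; rewrite -!cats1 lexlt_cat2l /= (negbTE (eord_neq yz)). Qed.

Lemma lexlt_between u k a y z : lexlt_from u k a -> lexlt_from u a (rcons k z) ->
  lexlt_from u (rcons a y) (rcons k z).
Proof.
move=> ka akz; rewrite -cats1 -[rcons k z]cats0 lexlt_cat //.
apply/negP => /prefixP[t]; case/lastP: t => [|t w].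
  by rewrite cats0 => ea; rewrite ea lexlt_irr in akz.
rewrite -rcons_cat => /rcons_inj[ek _]; rewrite ek in ka.
by have := reflc_lt_trans (@lexlt_trans u) (lexle_prefix u a t) ka; rewrite lexlt_irr.
Qed.

Lemma shortlexlt_irr u : irreflexive (shortlexlt u).
Proof. by move=> s; rewrite /shortlexlt ltnn eqxx lexlt_irr. Qed.

Lemma shortlexlt_trans u : transitive (shortlexlt u).
Proof.
move=> b a c; rewrite /shortlexlt.
case/orP=> [ab|/andP[/eqP-> ab]] /orP[bc|/andP[/eqP<- bc]].
- by rewrite (ltn_trans ab bc).
- by rewrite ab.
- by rewrite bc.
- by rewrite eqxx (lexlt_trans ab bc) orbT.
Qed.

Lemma shortlexlt_total u a b : path (@gE G) u a -> path (@gE G) u b -> a != b ->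
  shortlexlt u a b || shortlexlt u b a.
Proof.
move=> pa pb ab; rewrite /shortlexlt eq_sym.
by case: ltngtP => //= _; apply: lexlt_total.
Qed.

Lemma shortlexlt_rcons u a b y z : shortlexlt u a b ->
  shortlexlt u (rcons a y) (rcons b z).
Proof.
rewrite /shortlexlt !size_rcons ltnS eqSS => /orP[->//|/andP[/eqP ab lt_ab]].
rewrite ab eqxx -!cats1 lexlt_cat ?orbT //; apply: contraTN lt_ab.
case/prefixP=> [[|w t] eb]; first by rewrite eb cats0 lexlt_irr.
by move: ab; rewrite eb size_cat /=; lia.
Qed.

Lemma shortlexle_prefix u a t : reflc (shortlexlt u) a (a ++ t).
Proof.
case: t => [|y t]; first by rewrite cats0 reflc_refl.
by rewrite /reflc /shortlexlt size_cat /= addnS ltnS leq_addr !orbT.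
Qed.

Lemma shortlexlt_rcons_eord u s y z : eord (last u s) y z ->
  shortlexlt u (rcons s y) (rcons s z).
Proof. by move=> yz; rewrite /shortlexlt !size_rcons eqxx lexlt_rcons_eord ?orbT. Qed.

Lemma lexmin_unique u v s t : is_lexmin u v s -> is_lexmin u v t -> s = t.
Proof.
case=> ps us s_min [pt ut t_min]; case: (eqVneq s t) => // st.
have ts : t != s by rewrite eq_sym.
by have := lexlt_trans (s_min t pt ut ts) (t_min s ps us st); rewrite lexlt_irr.
Qed.

Lemma slmin_unique u v s t : is_slmin u v s -> is_slmin u v t -> s = t.
Proof.
case=> ps s_min [pt t_min]; case: (eqVneq s t) => // st.
have ts : t != s by rewrite eq_sym.
by have := shortlexlt_trans (s_min t pt ts) (t_min s ps st); rewrite shortlexlt_irr.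
Qed.

End Paths.

Section Neighbours.
Variables (G : egraph) (v : G).

Lemma mem_nbrs w : (w \in nbrs v) = gE v w.
Proof. by rewrite mem_sort mem_filter mem_enum andbT. Qed.

Lemma size_nbrs : size (nbrs v) <= #|G|.
Proof. by rewrite size_sort cardE size_filter count_size. Qed.

Lemma nbrs_sorted : pairwise (eord v) (nbrs v).
Proof.
have eord_v_trans : transitive (eord v) by move=> y x z; apply: eord_trans.
have le_sorted : pairwise (reflc (eord v)) (nbrs v).
  rewrite -sorted_pairwise; last by move=> y x z; apply: reflc_trans.
  apply: (sort_sorted_in (reflc_total_in (@eord_total G v))).
  by apply/allP=> w; rewrite mem_filter => /andP[].
have : pairwise [rel x y | reflc (eord v) x y && (x != y)] (nbrs v).
  by rewrite pairwise_relI le_sorted -uniq_pairwise sort_uniq filter_uniq ?enum_uniq.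
by apply: sub_pairwise => x y /andP[/orP[/eqP->|//]]; rewrite eqxx.
Qed.

End Neighbours.

Section Homomorphisms.
Variables (G H : egraph) (h : G -> H).
Hypothesis hom_h : is_hom h.

Lemma hom_root : h (groot G) = groot H.
Proof. by case: hom_h => _ /(_ (groot G)) [_ ->]. Qed.

Lemma lexlt_map u a b : lexlt_from u a b -> lexlt_from (h u) (map h a) (map h b).
Proof.
case: hom_h => _ _ hom_eord; elim: a u b => [|x a IH] u [|y b] //=.
case: (eqVneq x y) => [<-|_ /hom_eord xy]; first by rewrite eqxx; apply: IH.
by rewrite (negbTE (eord_neq xy)).
Qed.

Lemma shortlexlt_map u a b : shortlexlt u a b -> shortlexlt (h u) (map h a) (map h b).
Proof.
by rewrite /shortlexlt !size_map => /orP[->//|/andP[-> /lexlt_map->]]; rewrite orbT.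
Qed.

End Homomorphisms.

Variant discipline := Stack | Queue.

Definition push (d : discipline) (T : Type) (new rest : seq T) : seq T :=
  if d is Stack then new ++ rest else rest ++ new.

Lemma perm_push d (T : eqType) (new rest : seq T) : perm_eq (push d new rest) (new ++ rest).
Proof. by case: d; rewrite //= perm_catC. Qed.

Lemma map_push d T U (f : T -> U) new rest :
  map f (push d new rest) = push d (map f new) (map f rest).
Proof. by case: d; rewrite /= map_cat. Qed.

Section Search.
Variable G : egraph.
Local Notation r := (groot G).

Definition search_step (d : discipline) (st : seq G * seq G) : seq G * seq G :=
  let: (L, Q) := st in
  match Q with
  | [::] => (L, Q)
  | v :: Q' =>
      if v \in L then (L, Q')
      else let L' := rcons L v in (L', push d [seq w <- nbrs v | w \notin L'] Q')
  end.

Definition search_state (d : discipline) : seq G * seq G :=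
  iter (fuel G) (search_step d) ([::], [:: r]).

Lemma dfs_traversalE : dfs_traversal G = (search_state Stack).1.
Proof. by []. Qed.

Lemma bfs_traversalE : bfs_traversal G = (search_state Queue).1.
Proof. by []. Qed.

(* A visit adds a vertex to L and pushes at most #|G| entries, hence the
   weight #|G|.+1 on the number of unvisited vertices. *)
Definition search_measure (st : seq G * seq G) : nat :=
  size st.2 + (#|G| - size st.1) * #|G|.+1.

Lemma search_step_uniq d st : uniq st.1 -> uniq (search_step d st).1.
Proof. by case: st => L [|v Q] //= uL; case: ifP => //= /negbT vL; rewrite rcons_uniq vL. Qed.

Lemma search_step_measure d st : uniq st.1 -> st.2 != [::] ->
  search_measure (search_step d st) < search_measure st.
Proof.
case: st => L [|v Q] //= uL _; rewrite /search_measure; case: ifP => /= vL; first lia.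
have L_small : size L < #|G|.
  have uvL : uniq (v :: L) by rewrite /= vL.
  by rewrite -[_.+1]/(size (v :: L)) -(card_uniqP uvL) max_card.
have new_small : size [seq w <- nbrs v | w \notin rcons L v] <= #|G|.
  by rewrite size_filter (leq_trans (count_size _ _)) ?size_nbrs.
rewrite (perm_size (perm_push _ _ _)) size_cat size_rcons.
(* Generalizing the sizes identifies copies that differ only in implicit
   types, which lia would treat as distinct atoms. *)
move: L_small new_small; move: (size L) (size [seq w <- _ | _]) (size Q) => l k q.
set n := #|G|; clearbody n => l_small k_small.
have -> : n - l = (n - l.+1).+1 by lia.
by rewrite mulSn; set X := _ * _; lia.
Qed.

Lemma iter_search_step_empty d k st : uniq st.1 -> search_measure st <= k ->
  (iter k (search_step d) st).2 = [::].
Proof.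
elim: k st => [|k IH] st uL le_k.
  by move: le_k; rewrite leqn0 /search_measure addn_eq0 size_eq0 => /andP[/eqP].
case: (eqVneq st.2 [::]) => [done|pending].
  by rewrite iter_fix //; case: st done {uL le_k} => L [].
rewrite iterSr IH ?search_step_uniq //.
by rewrite -ltnS (leq_trans _ le_k) // search_step_measure.
Qed.

Lemma search_state_empty d : (search_state d).2 = [::].
Proof. by apply: iter_search_step_empty => //; rewrite /search_measure /fuel /=; nia. Qed.

Record path_key_spec (lt : rel (seq G)) (valid : G -> seq G -> bool)
    (key : G -> seq G) : Prop := PathKeySpec {
  spec_lt_trans : transitive lt;
  spec_lt_irr : irreflexive lt;
  spec_le_prefix : forall a t, reflc lt a (a ++ t);
  spec_lt_rcons_eord : forall s y z, eord (last r s) y z -> lt (rcons s y) (rcons s z);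
  spec_lt_rcons2 : forall x a b y, valid x a -> valid x b -> lt a b ->
    lt (rcons a y) (rcons b y);
  spec_valid_path : forall x s, valid x s -> is_path_between r x s;
  spec_valid_nil : valid r [::];
  spec_valid_prefix : forall x s t, valid x (s ++ t) -> valid (last r s) s;
  spec_valid_rcons : forall x s y, valid x s -> gE x y -> y \notin r :: s ->
    valid y (rcons s y);
  spec_key_valid : forall x, valid x (key x);
  spec_key_min : forall x s, valid x s -> reflc lt (key x) s }.

Section Invariant.
Variables (lt : rel (seq G)) (valid : G -> seq G -> bool) (key : G -> seq G).
Hypothesis K : path_key_spec lt valid key.
Local Notation le := (reflc lt).
Local Notation entry_lt := (fun e f : G * seq G => lt e.2 f.2).
Let lt_trans := spec_lt_trans K.
Let lt_irr := spec_lt_irr K.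
Let le_prefix := spec_le_prefix K.
Let lt_rcons_eord := spec_lt_rcons_eord K.
Let lt_rcons2 := spec_lt_rcons2 K.
Let valid_path := spec_valid_path K.
Let valid_nil := spec_valid_nil K.
Let valid_prefix := spec_valid_prefix K.
Let valid_rcons := spec_valid_rcons K.
Let key_valid := spec_key_valid K.
Let key_min := spec_key_min K.

Lemma lt_nil s : lt s [::] = false.
Proof.
by apply/negP => s0; have := lt_reflc_trans lt_trans s0 (le_prefix [::] s); rewrite lt_irr.
Qed.

Lemma key_last x : last r (key x) = x.
Proof. by case/andP: (valid_path (key_valid x)) => _ /eqP. Qed.

Lemma key_inj : injective key.
Proof. by move=> x y exy; rewrite -(key_last x) exy key_last. Qed.

Lemma key_root : key r = [::].
Proof. by case/orP: (key_min valid_nil) => [/eqP//|]; rewrite lt_nil. Qed.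

(* Z is the stack/queue with each vertex w annotated by the candidate path
   key q ++ [w] through the visited vertex q that pushed it; the root starts
   with the empty path. *)
Definition entry_ok (L : seq G) (e : G * seq G) : Prop :=
  exists2 q, q \in L & gE q e.1 /\ e.2 = rcons (key q) e.1.

Record search_inv (L : seq G) (Z : seq (G * seq G)) : Prop := SearchInv {
  visited_lt : forall a b, a \in L -> b \notin L -> lt (key a) (key b);
  visited_sorted : pairwise (fun a b => lt (key a) (key b)) L;
  pending_start : L = [::] -> Z = [:: (r, [::])];
  pending_sorted : pairwise entry_lt Z;
  pending_ok : forall e, e \in Z -> L != [::] -> entry_ok L e;
  frontier_pending : forall q w, q \in L -> gE q w -> w \notin L ->
    (w, rcons (key q) w) \in Z }.

Definition state_inv (st : seq G * seq G) : Prop :=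
  exists2 Z, search_inv st.1 Z & st.2 = unzip1 Z.

Lemma root_visited L Z : search_inv L Z -> L != [::] -> r \in L.
Proof.
case: L => // a L [a_lt _ _ _ _ _] _; apply/negPn/negP => /(a_lt a r (mem_head _ _)).
by rewrite key_root lt_nil.
Qed.

Lemma key_visited L Z q z : search_inv L Z -> q \in L -> z \in r :: key q -> z \in L.
Proof.
move=> [a_lt _ _ _ _ _] qL /mem_last_prefix [s [t [ekq <-]]].
apply/negPn/negP => /(a_lt q _ qL) lt_kq_ks.
have /key_min le_ks_s : valid (last r s) s by apply: (@valid_prefix q s t); rewrite -ekq.
have le_s_kq : le s (key q) by rewrite ekq.
have := lt_reflc_trans lt_trans lt_kq_ks (reflc_trans lt_trans le_ks_s le_s_kq).
by rewrite lt_irr.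
Qed.

Lemma pending_head_le L v c Z b : search_inv L ((v, c) :: Z) -> b \notin L ->
  le c (key b).
Proof.
move=> I bL; case: (I) => [_ _ start sortedZ _ frontier].
case: (eqVneq L [::]) => [/start[_ -> _]|Ln]; first exact: (le_prefix [::]).
case/andP: (valid_path (key_valid b)) => pb /eqP lb.
have [s [y [t [ekb sL yL]]]] : exists s y t,
    [/\ key b = s ++ y :: t, last r s \in L & y \notin L].
  by apply: (split_exit (P := fun x => x \in L)); rewrite ?lb ?(root_visited I).
set q := last r s in sL.
have qy : gE q y by move: pb; rewrite ekb cat_path => /and3P[].
have le_c_qy : le c (rcons (key q) y).
  move: (frontier q y sL qy yL); rewrite in_cons => /predU1P[[_ <-]|inZ].
    exact: reflc_refl.
  by move: sortedZ => /= /andP[/allP/(_ _ inZ) c_lt _]; rewrite /reflc c_lt orbT.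
have le_qy_b : le (rcons (key q) y) (key b).
  have vq : valid q s by apply: (@valid_prefix b s (y :: t)); rewrite -ekb.
  have le_sy_b : le (rcons s y) (key b) by rewrite ekb -cat_rcons le_prefix.
  case/orP: (key_min vq) => [/eqP->//|lt_kq_s].
  by rewrite /reflc (lt_reflc_trans lt_trans (lt_rcons2 y (key_valid q) vq lt_kq_s)) ?orbT.
exact (reflc_trans lt_trans le_c_qy le_qy_b).
Qed.

Lemma pending_head_key L v c Z : search_inv L ((v, c) :: Z) -> v \notin L ->
  le (key v) c /\ forall b, b \notin L -> b != v -> lt (key v) (key b).
Proof.
move=> I vL; case: (I) => [_ _ start _ ok _].
have vc : valid v c.
  case: (eqVneq L [::]) => [/start[-> ->]//|Ln].
  have [q qL [/= qv ->]] := ok _ (mem_head _ _) Ln.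
  exact: valid_rcons (key_valid q) qv (contra (key_visited I qL) vL).
split=> [|b bL bv]; first exact: key_min.
case/orP: (reflc_trans lt_trans (key_min vc) (pending_head_le I bL)) => // /eqP/key_inj ev.
by rewrite ev eqxx in bv.
Qed.

Lemma search_inv_pop L v c Z : search_inv L ((v, c) :: Z) -> v \in L -> search_inv L Z.
Proof.
move=> [a_lt sortedL start sortedZ ok frontier] vL; split=> //.
- by move=> L0; rewrite L0 in vL.
- by case/andP: sortedZ.
- by move=> e eZ; apply: ok; rewrite in_cons eZ orbT.
- move=> q w qL qw wL; move: (frontier q w qL qw wL); rewrite in_cons.
  by case/predU1P=> [[ewv _]|//]; rewrite ewv vL in wL.
Qed.

Definition new_entries (L : seq G) (v : G) : seq (G * seq G) :=
  [seq (w, rcons (key v) w) | w <- [seq w <- nbrs v | w \notin rcons L v]].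

Lemma unzip1_push_new_entries d L v Z :
  unzip1 (push d (new_entries L v) Z) =
  push d [seq w <- nbrs v | w \notin rcons L v] (unzip1 Z).
Proof. by rewrite /unzip1 map_push -map_comp map_id. Qed.

Lemma new_entries_sorted L v : pairwise entry_lt (new_entries L v).
Proof.
rewrite pairwise_map; apply/pairwise_filter/(sub_pairwise _ (nbrs_sorted v)) => y z yz.
by apply: lt_rcons_eord; rewrite key_last.
Qed.

Lemma search_inv_visit L v c Z Z' : search_inv L ((v, c) :: Z) -> v \notin L ->
  Z' =i new_entries L v ++ Z -> pairwise entry_lt Z' ->
  search_inv (rcons L v) Z'.
Proof.
move=> I vL memZ' sortedZ'; have [_ v_lt] := pending_head_key I vL.
case: (I) => [a_lt sortedL start _ ok frontier]; split=> //.
- move=> a b; rewrite !mem_rcons !in_cons negb_or => /predU1P[->|aL] /andP[bv bL].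
    exact: v_lt.
  exact: a_lt.
- by rewrite pairwise_rcons sortedL andbT; apply/allP => a aL; apply: a_lt.
- by case: (L).
- move=> e; rewrite memZ' mem_cat => /orP[/mapP[w] | eZ _].
    by rewrite mem_filter mem_nbrs => /andP[_ vw] -> _; exists v; rewrite ?mem_rcons ?mem_head.
  case: (eqVneq L [::]) => [/start[_ _ Z0]|Ln]; first by rewrite Z0 in eZ.
  have [q qL qe] := ok e (mem_behead (s := (v, c) :: Z) eZ) Ln.
  by exists q => //; rewrite mem_rcons in_cons qL orbT.
- move=> q w; rewrite memZ' mem_cat !mem_rcons !in_cons negb_or.
  case/predU1P=> [->|qL] qw /andP[wv wL].
    apply/orP; left; apply/mapP; exists w => //.
    by rewrite mem_filter mem_rcons in_cons negb_or wv wL mem_nbrs.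
  move: (frontier q w qL qw wL); rewrite in_cons => /predU1P[[ewv _]|->]; last exact: orbT.
  by rewrite ewv eqxx in wv.
Qed.

Definition push_keeps_sorted (d : discipline) : Prop :=
  forall L v c Z, search_inv L ((v, c) :: Z) -> v \notin L ->
  pairwise entry_lt (push d (new_entries L v) Z).

Lemma state_inv_step d st :
  push_keeps_sorted d -> state_inv st -> state_inv (search_step d st).
Proof.
move=> push_sorted; case: st => L _ [[|[v c] Z] /= I ->]; first by exists [::].
case: ifP => [vL|/negbT vL]; first by exists Z => //; apply: search_inv_pop I vL.
exists (push d (new_entries L v) Z); last by rewrite unzip1_push_new_entries.
exact: search_inv_visit I vL (perm_mem (perm_push _ _ _)) (push_sorted _ _ _ _ I vL).
Qed.

Lemma stack_keeps_sorted :
  (forall k a y z, lt k a -> lt a (rcons k z) -> lt (rcons a y) (rcons k z)) ->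
  push_keeps_sorted Stack.
Proof.
move=> lt_between L v c Z I vL; have [le_kv_c _] := pending_head_key I vL.
case: (I) => [a_lt _ start /= /andP[/allP c_lt sortedZ] ok _].
rewrite pairwise_cat new_entries_sorted sortedZ !andbT.
apply/allrelP => _ f /mapP[w _ ->] fZ /=.
case: (eqVneq L [::]) => [/start[_ _ Z0]|Ln]; first by rewrite Z0 in fZ.
have [q qL [_ ef]] := ok f (mem_behead (s := (v, c) :: Z) fZ) Ln.
rewrite ef; apply: lt_between (a_lt q v qL vL) _; rewrite -ef.
exact (reflc_lt_trans lt_trans le_kv_c (c_lt f fZ)).
Qed.

Lemma queue_keeps_sorted :
  (forall a b y z, lt a b -> lt (rcons a y) (rcons b z)) ->
  push_keeps_sorted Queue.
Proof.
move=> lt_rcons L v c Z I vL.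
case: (I) => [a_lt _ start /= /andP[_ sortedZ] ok _].
rewrite pairwise_cat new_entries_sorted sortedZ !andbT /=.
apply/allrelP => f _ fZ /mapP[w _ ->] /=.
case: (eqVneq L [::]) => [/start[_ _ Z0]|Ln]; first by rewrite Z0 in fZ.
have [q qL [_ ->]] := ok f (mem_behead (s := (v, c) :: Z) fZ) Ln.
exact/lt_rcons/a_lt.
Qed.

Lemma search_inv_final L : connected G -> search_inv L [::] ->
  is_full_enum L /\ forall x y, trav_le L x y = le (key x) (key y).
Proof.
move=> conn I; case: (I) => [_ sortedL start _ _ frontier].
have Ln : L != [::] by apply/eqP => /start.
have closed q w : q \in L -> gE q w -> w \in L.
  by move=> qL qw; apply/negPn/negP => /(frontier q w qL qw).
have all_visited x : x \in L.
  case/connectP: (conn x) => p + ->; elim: p r (root_visited I Ln) => //= y p IH u uL.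
  by case/andP=> uy; apply/IH/(closed u y uL uy).
have uL : uniq L by apply: pairwise_uniq sortedL => x; apply: lt_irr.
have lt_index a b : index a L < index b L -> lt (key a) (key b).
  move=> ab; have /(pairwiseP a) sorted_nth := sortedL.
  have idx_lt z : index z L \in gtn (size L) by rewrite inE index_mem.
  by have := sorted_nth _ _ (idx_lt a) (idx_lt b) ab; rewrite !nth_index.
split=> // x y; rewrite /trav_le; apply/idP/idP => [|le_xy].
  rewrite leq_eqVlt => /predU1P[/index_inj xy|/lt_index lt_xy].
    by rewrite xy ?reflc_refl.
  by rewrite /reflc lt_xy orbT.
rewrite leqNgt; apply/negP => /lt_index lt_yx.
by have := lt_reflc_trans lt_trans lt_yx le_xy; rewrite lt_irr.
Qed.

Lemma search_spec d : connected G -> push_keeps_sorted d ->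
  is_full_enum (search_state d).1 /\
  forall x y, trav_le (search_state d).1 x y = le (key x) (key y).
Proof.
move=> conn push_sorted.
have : state_inv (search_state d).
  rewrite /search_state; elim: (fuel G) => [|k IH]; last exact: state_inv_step.
  by exists [:: (r, [::])]; split.
have := search_state_empty d; case: (search_state d) => L Q /= -> [[|//] I _].
exact: search_inv_final.
Qed.

End Invariant.
End Search.

Section Traversals.
Variable G : egraph.
Hypothesis conn : connected G.
Local Notation r := (groot G).
Implicit Types (x y : G) (a b s t : seq G).

Definition proper_path_to x s : bool := is_path_between r x s && uniq (r :: s).

Lemma size_proper_path x s : proper_path_to x s -> size s < #|G|.
Proof.
by case/andP=> _ /card_uniqP card_s; rewrite -[_ < _]/(size (r :: s) <= _) -card_s max_card.
Qed.

Lemma lexlt_rcons2_proper x a b y : proper_path_to x a -> proper_path_to x b ->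
  lexlt_from r a b -> lexlt_from r (rcons a y) (rcons b y).
Proof.
move=> /andP[/andP[_ /eqP a_x] _] /andP[/andP[_ /eqP b_x] b_uniq] ab.
rewrite -!cats1 lexlt_cat //; apply/negP => /prefixP[t eb].
case/lastP: t eb => [|t z] eb; first by rewrite eb cats0 lexlt_irr in ab.
have z_x : z = x by rewrite -b_x eb last_cat last_rcons.
move: b_uniq; rewrite eb -cat_cons cat_uniq => /and3P[_ /hasPn/(_ z)].
by rewrite mem_rcons mem_head z_x -a_x mem_last => /(_ isT).
Qed.

Definition lex_key x : seq G := least_seq #|G| (lexlt_from r) (proper_path_to x).

Definition shortlex_key x : seq G := least_seq #|G| (shortlexlt r) (is_path_between r x).

Lemma proper_path_exists x : exists2 s, proper_path_to x s & size s <= #|G|.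
Proof.
case/connectP: (conn x) => p p_path ->; case: (shortenP p_path) => s s_path s_uniq _.
have s_proper : proper_path_to (last r s) s.
  by rewrite /proper_path_to /is_path_between s_path eqxx.
by exists s => //; apply/ltnW/(size_proper_path s_proper).
Qed.

Lemma lex_keyP x : proper_path_to x (lex_key x) /\
  forall s, proper_path_to x s -> reflc (lexlt_from r) (lex_key x) s.
Proof.
apply: least_seqP; [exact: lexlt_trans | | exact: proper_path_exists |].
  by move=> a b /andP[/andP[pa _] _] /andP[/andP[pb _] _]; apply: lexlt_total.
move=> s m /size_proper_path s_small _ /andP[_ n_lt_s].
by have := ltn_trans s_small n_lt_s; rewrite ltnn.
Qed.

Lemma shortlex_keyP x : is_path_between r x (shortlex_key x) /\
  forall s, is_path_between r x s -> reflc (shortlexlt r) (shortlex_key x) s.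
Proof.
apply: least_seqP; [exact: shortlexlt_trans | | | ].
- by move=> a b /andP[pa _] /andP[pb _]; apply: shortlexlt_total.
- by have [s /andP[ps _] s_small] := proper_path_exists x; exists s.
- by move=> s m _ _ /andP[m_small n_lt_s]; rewrite /shortlexlt (leq_ltn_trans m_small n_lt_s).
Qed.

Lemma lex_key_spec : path_key_spec (lexlt_from r) proper_path_to lex_key.
Proof.
split.
- exact: lexlt_trans.
- exact: lexlt_irr.
- exact: lexle_prefix.
- exact: lexlt_rcons_eord.
- exact: lexlt_rcons2_proper.
- by move=> x s /andP[].
- by rewrite /proper_path_to /is_path_between /= eqxx.
- move=> x s t /andP[/path_between_prefix ps].
  by rewrite /proper_path_to ps -cat_cons cat_uniq => /andP[].
- move=> x s y /andP[xs us] xy ys.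
  by rewrite /proper_path_to (path_between_rcons xs xy) -rcons_cons rcons_uniq ys.
- by move=> x; case: (lex_keyP x).
- by move=> x; case: (lex_keyP x).
Qed.

Lemma shortlex_key_spec : path_key_spec (shortlexlt r) (is_path_between r) shortlex_key.
Proof.
split.
- exact: shortlexlt_trans.
- exact: shortlexlt_irr.
- exact: shortlexle_prefix.
- exact: shortlexlt_rcons_eord.
- by move=> x a b y _ _; apply: shortlexlt_rcons.
- by [].
- by rewrite /is_path_between /= eqxx.
- exact: path_between_prefix.
- by move=> x s y xs xy _; apply: path_between_rcons xs xy.
- by move=> x; case: (shortlex_keyP x).
- by move=> x; case: (shortlex_keyP x).
Qed.

Lemma dfs_traversal_spec : is_full_enum (dfs_traversal G) /\
  forall x y, trav_le (dfs_traversal G) x y = reflc (lexlt_from r) (lex_key x) (lex_key y).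
Proof.
rewrite dfs_traversalE; apply: (search_spec lex_key_spec conn).
exact: stack_keeps_sorted lex_key_spec (@lexlt_between G r).
Qed.

Lemma bfs_traversal_spec : is_full_enum (bfs_traversal G) /\
  forall x y, trav_le (bfs_traversal G) x y =
              reflc (shortlexlt r) (shortlex_key x) (shortlex_key y).
Proof.
rewrite bfs_traversalE; apply: (search_spec shortlex_key_spec conn).
exact: queue_keeps_sorted shortlex_key_spec (@shortlexlt_rcons G r).
Qed.

Lemma lex_key_lexmin x : is_lexmin r x (lex_key x).
Proof.
have [/andP[px ux] key_min] := lex_keyP x; split=> // t pt ut tk.
have proper_t : proper_path_to x t by rewrite /proper_path_to pt ut.
by case/orP: (key_min t proper_t) => // /eqP kt; rewrite kt eqxx in tk.
Qed.

Lemma shortlex_key_slmin x : is_slmin r x (shortlex_key x).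
Proof.
have [px key_min] := shortlex_keyP x; split=> // t pt tk.
by case/orP: (key_min t pt) => // /eqP kt; rewrite kt eqxx in tk.
Qed.

End Traversals.

Section Functoriality.
Variables (G H : egraph) (h : G -> H).
Hypotheses (conn_G : connected G) (conn_H : connected H).

Lemma lex_hom_key : is_lex_hom h -> forall x, map h (lex_key x) = lex_key (h x).
Proof.
move=> [hom_h lex_h] x; apply: lexmin_unique (lex_key_lexmin conn_H (h x)).
by rewrite -(hom_root hom_h); apply: lex_h (lex_key_lexmin conn_G x).
Qed.

Lemma shortlex_hom_key : is_shortlex_hom h ->
  forall x, map h (shortlex_key x) = shortlex_key (h x).
Proof.
move=> [hom_h sl_h] x; apply: slmin_unique (shortlex_key_slmin conn_H (h x)).
by rewrite -(hom_root hom_h); apply: sl_h (shortlex_key_slmin conn_G x).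
Qed.

Lemma dfs_traversal_hom : is_lex_hom h ->
  {homo h : x y / trav_le (dfs_traversal G) x y >-> trav_le (dfs_traversal H) x y}.
Proof.
move=> lex_h x y; have [hom_h _] := lex_h.
rewrite (dfs_traversal_spec conn_G).2 (dfs_traversal_spec conn_H).2 -!lex_hom_key //.
case/orP=> [/eqP->|/(lexlt_map hom_h)]; first exact: reflc_refl.
by rewrite hom_root // /reflc => ->; rewrite orbT.
Qed.

Lemma bfs_traversal_hom : is_shortlex_hom h ->
  {homo h : x y / trav_le (bfs_traversal G) x y >-> trav_le (bfs_traversal H) x y}.
Proof.
move=> sl_h x y; have [hom_h _] := sl_h.
rewrite (bfs_traversal_spec conn_G).2 (bfs_traversal_spec conn_H).2 -!shortlex_hom_key //.
case/orP=> [/eqP->|/(shortlexlt_map hom_h)]; first exact: reflc_refl.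
by rewrite hom_root // /reflc => ->; rewrite orbT.
Qed.

End Functoriality.

Theorem corollary9p4 :
  (forall G : egraph, connected G ->
     is_full_enum (dfs_traversal G) /\ is_full_enum (bfs_traversal G)) /\
  (forall (G H : egraph) (h : G -> H), connected G -> connected H ->
     is_lex_hom h ->
     forall x y : G, trav_le (dfs_traversal G) x y ->
                     trav_le (dfs_traversal H) (h x) (h y)) /\
  (forall (G H : egraph) (h : G -> H), connected G -> connected H ->
     is_shortlex_hom h ->
     forall x y : G, trav_le (bfs_traversal G) x y ->
                     trav_le (bfs_traversal H) (h x) (h y)).
Proof.
split.
  move=> G conn.
  by split; [case: (dfs_traversal_spec conn) | case: (bfs_traversal_spec conn)].
split=> G H h conn_G conn_H; [exact: dfs_traversal_hom | exact: bfs_traversal_hom].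
Qed.
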